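(* Let $d$ be a weak simulation quasimetric on networks of pTCWS. Then the relation $\mathcal R=\{(M,N) : d(M,N)=0\}$ is a weak probabilistic simulation, i.e. whenever $M\,\mathcal R\,N$ and $M\xrightarrow{\alpha}\Delta$, there exist a weak transition $N\overset{\hat\alpha}{\Longrightarrow}\Theta$ and a matching $\omega\in\Omega(\Delta,\Theta)$ such that $\omega(M',N')>0$ implies $M'\,\mathcal R\,N'$.
   Context: The process calculus pTCWS. Processes $P,Q$ and probabilistic choices $C,D$ are $P ::= \mathsf{nil} \mid {!}\langle u\rangle.C \mid \lfloor ?(x).C\rfloor D \mid \tau.C \mid \sigma.C \mid X \mid \mathsf{fix}\,X.P$ and $C ::= \bigoplus_{i\in I} p_i{:}P_i$ ($I$ finite non-empty, $p_i\in(0,1]$, $\sum_i p_i=1$); in $\mathsf{fix}\,X.P$ every occurrence of $X$ is time-guarded (under a $\sigma$-prefix or in a timeout branch $D$). $1{:}P$ is written $P$; $P\oplus_pQ$ is $p{:}P\oplus(1-p){:}Q$; ${!}\langle v\rangle$ is ${!}\langle v\rangle.\mathsf{nil}$. Networks: $M::=\mathbf 0\mid M_1\mid M_2\mid n[P]^\nu\mid\bot$, where $n[P]^\nu$ is a node named $n$ running closed process $P$ with neighbour set $\nu$, and $\bot$ is a stuck network; $\mathrm{nds}(M)$ is the set of node names. Structural congruence $\equiv$: least equivalence preserved by $\mid$, making $\mid$ a commutative monoid with unit $\mathbf 0$, with $n[\mathsf{fix}\,X.P]^\nu\equiv n[P\{\mathsf{fix}\,X.P/X\}]^\nu$. Networks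 are assumed well-formed (no node is its own neighbour, distinct names, symmetric neighbourhood, connected neighbour graph). $\mathrm{rcv}(P)$ holds iff $n[P]^\nu\equiv n[\lfloor ?(x).C\rfloor D]^\nu$ for some $x,C,D$. Semantics: $\mathcal D(\mathcal N)$ is the set of finite-support probability distributions on networks, $|\Delta|$ the total mass of a sub-distribution, $\overline M$ the Dirac distribution; $[\![n[\bigoplus_i p_i{:}P_i]^\nu]\!]=\sum_ip_i\overline{n[P_i]^\nu}$; $(\Delta\mid\Theta)(M_1\mid M_2)=\Delta(M_1)\Theta(M_2)$. Transitions $M\xrightarrow{\lambda}\Delta$, $\lambda\in\{m!v\triangleright\nu, m?v,\tau,\sigma\}$, form the least relation closed under: (Snd) $m[{!}\langle v\rangle.C]^\nu\xrightarrow{m!v\triangleright\nu}[\![m[C]^\nu]\!]$; (Rcv) if $m\in\nu$: $n[\lfloor ?(x).C\rfloor D]^\nu\xrightarrow{m?v}[\![n[C\{v/x\}]^\nu]\!]$; $\mathbf 0\xrightarrow{m?v}\overline{\mathbf 0}$; (RcvEnb) if $\neg(m\in\nu\wedge\mathrm{rcv}(P))$ and $m\ne n$: $n[P]^\nu\xrightarrow{m?v}\overline{n[P]^\nu}$; (RcvPar) $M\xrightarrow{m?v}\Delta$, $N\xrightarrow{m?v}\Theta$ give $M\mid N\xrightarrow{m?v}\Delta\mid\Theta$; (Bcast) $M\xrightarrow{m!v\triangleright\nu}\Delta$, $N\xrightarrow{m?v}\Theta$ give $M\mid N\xrightarrow{m!v\triangleright(\nu\setminus\mathrm{nds}(N))}\Delta\mid\Theta$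 (and symmetrically); (Tau) $m[\tau.C]^\nu\xrightarrow{\tau}[\![m[C]^\nu]\!]$; (TauPar) $M\xrightarrow{\tau}\Delta$ and $N$ not of the form $\bot\mid N'$ give $M\mid N\xrightarrow{\tau}\Delta\mid\overline N$ (and symmetrically); $\mathbf 0\xrightarrow{\sigma}\overline{\mathbf 0}$; $n[\mathsf{nil}]^\nu\xrightarrow{\sigma}\overline{n[\mathsf{nil}]^\nu}$; (Timeout) $n[\lfloor ?(x).C\rfloor D]^\nu\xrightarrow{\sigma}[\![n[D]^\nu]\!]$; (Sleep) $n[\sigma.C]^\nu\xrightarrow{\sigma}[\![n[C]^\nu]\!]$; ($\sigma$-Par) $M\xrightarrow{\sigma}\Delta$, $N\xrightarrow{\sigma}\Theta$ give $M\mid N\xrightarrow{\sigma}\Delta\mid\Theta$; (Rec) $n[P\{\mathsf{fix}\,X.P/X\}]^\nu\xrightarrow{\lambda}\Delta$ gives $n[\mathsf{fix}\,X.P]^\nu\xrightarrow{\lambda}\Delta$; (ShhSnd) $M\xrightarrow{m!v\triangleright\emptyset}\Delta$ gives $M\xrightarrow{\tau}\Delta$; (ObsSnd) $M\xrightarrow{m!v\triangleright\nu}\Delta$ with $\nu\ne\emptyset$ gives $M\xrightarrow{!v\triangleright\nu}\Delta$. $\bot$ has no transitions. $\alpha$ ranges over $!v\triangleright\nu$, $m?v$, $\sigma$, $\tau$. Weak transitions: $M\xrightarrow{\hat\tau}\Delta$ iff $M\xrightarrow{\tau}\Delta$ or $\Delta=\overline M$; for $\alpha\ne\tau$, $\xrightarrow{\hat\alpha}=\xrightarrow{\alpha}$.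 For $\Delta=\sum_{i\in I}p_i\overline{M_i}$, $\Delta\xrightarrow{\hat\alpha}\Theta$ iff for some non-empty $J\subseteq I$, $M_j\xrightarrow{\hat\alpha}\Theta_j$ ($j\in J$), $M_i$ has no $\hat\alpha$-transition ($i\notin J$), and $\Theta=\sum_{j\in J}p_j\Theta_j$. $\overset{\hat\tau}{\Longrightarrow}$ is the reflexive-transitive closure of $\xrightarrow{\hat\tau}$, and $\overset{\hat\alpha}{\Longrightarrow}=\overset{\hat\tau}{\Longrightarrow}\xrightarrow{\hat\alpha}\overset{\hat\tau}{\Longrightarrow}$ for $\alpha\neq\tau$. A pseudoquasimetric is $d:\mathcal N\times\mathcal N\to[0,1]$ with $d(M,M)=0$ and $d(M,N)\le d(M,O)+d(O,N)$. A matching $\omega\in\Omega(\Delta,\Theta)$ is a distribution on $\mathcal N\times\mathcal N$ with left marginal $\Delta$ and right marginal $\Theta$; $\mathcal K(d)(\Delta,\Theta)=\min_{\omega\in\Omega(\Delta,\Theta)}\sum_{M,N}\omega(M,N)d(M,N)$. A weak simulation quasimetric is a pseudoquasimetric $d$ such that for all $M,N$ with $d(M,N)<1$, whenever $M\xrightarrow{\alpha}\Delta$ there is $\Theta$ with $N\overset{\hat\alpha}{\Longrightarrow}\Theta$ and $\mathcal K(d)(\Delta,\Theta+(1-|\Theta|)\overline\bot)\le d(M,N)$. *)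

From Stdlib Require Import Reals List Relations ClassicalEpsilon.
Import ListNotations.
Open Scope R_scope.

Set Implicit Arguments.

Definition sum_list {T : Type} (f : T -> R) (s : list T) : R :=
  fold_right (fun x acc => f x + acc) 0 s.

Definition has_sum {T : Type} (f : T -> R) (r : R) : Prop :=
  exists s : list T, NoDup s /\ (forall x, f x <> 0 -> In x s) /\ sum_list f s = r.

Section PTCWS.

Context {V : Type}.

Inductive term : Type :=
| TVal (v : V)
| TVar (x : nat).

(* Processes; a probabilistic choice  (+)_{i in I} p_i : P_i  is the list of
   pairs (p_i, P_i).  Process variables X are natural numbers. *)
Inductive proc : Type :=
| PNil
| PSnd (u : term) (C : list (R * proc))
| PRcv (x : nat) (C : list (R * proc)) (D : list (R * proc))
| PTau (C : list (R * proc))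
| PSig (C : list (R * proc))
| PVar (X : nat)
| PFix (X : nat) (P : proc).

Definition choice := list (R * proc).

Inductive net : Type :=
| NZero
| NPar (M1 M2 : net)
| NNode (n : nat) (P : proc) (nu : list nat)
| NBot.

Fixpoint nds (M : net) : list nat :=
  match M with
  | NZero | NBot => []
  | NPar M1 M2 => nds M1 ++ nds M2
  | NNode n _ _ => [n]
  end.

Fixpoint nodes (M : net) : list (nat * list nat) :=
  match M with
  | NZero | NBot => []
  | NPar M1 M2 => nodes M1 ++ nodes M2
  | NNode n _ nu => [(n, nu)]
  end.

Definition subst_t (x : nat) (v : V) (u : term) : term :=
  match u with
  | TVal w => TVal w
  | TVar y => if Nat.eq_dec y x then TVal v else TVar y
  end.

(* P{v/x}; in |?(y).C|D the variable y binds in C only. *)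
Fixpoint subst_v (x : nat) (v : V) (P : proc) : proc :=
  match P with
  | PNil => PNil
  | PSnd u C => PSnd (subst_t x v u) (map (fun pq => match pq with (p, Q) => (p, subst_v x v Q) end) C)
  | PRcv y C D =>
      PRcv y (if Nat.eq_dec y x then C
              else map (fun pq => match pq with (p, Q) => (p, subst_v x v Q) end) C)
           (map (fun pq => match pq with (p, Q) => (p, subst_v x v Q) end) D)
  | PTau C => PTau (map (fun pq => match pq with (p, Q) => (p, subst_v x v Q) end) C)
  | PSig C => PSig (map (fun pq => match pq with (p, Q) => (p, subst_v x v Q) end) C)
  | PVar X => PVar X
  | PFix X Q => PFix X (subst_v x v Q)
  end.

Definition subst_vc (x : nat) (v : V) (C : choice) : choice :=
  map (fun pq => match pq with (p, Q) => (p, subst_v x v Q) end) C.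

(* P{Q/X} (Q is closed in all uses, so no capture can occur). *)
Fixpoint subst_p (X : nat) (Q : proc) (P : proc) : proc :=
  match P with
  | PNil => PNil
  | PSnd u C => PSnd u (map (fun pq => match pq with (p, P') => (p, subst_p X Q P') end) C)
  | PRcv y C D =>
      PRcv y (map (fun pq => match pq with (p, P') => (p, subst_p X Q P') end) C)
           (map (fun pq => match pq with (p, P') => (p, subst_p X Q P') end) D)
  | PTau C => PTau (map (fun pq => match pq with (p, P') => (p, subst_p X Q P') end) C)
  | PSig C => PSig (map (fun pq => match pq with (p, P') => (p, subst_p X Q P') end) C)
  | PVar Y => if Nat.eq_dec Y X then Q else PVar Y
  | PFix Y P' => if Nat.eq_dec Y X then PFix Y P' else PFix Y (subst_p X Q P')
  end.

(* Every (free) occurrence of X in P is time-guarded: under a sigma-prefix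
   or inside the timeout branch D of a receiver. *)
Fixpoint tguard (X : nat) (P : proc) : Prop :=
  match P with
  | PNil => True
  | PSnd _ C | PTau C =>
      (fix tgc (C : list (R * proc)) : Prop :=
         match C with [] => True | (_, Q) :: C' => tguard X Q /\ tgc C' end) C
  | PRcv _ C _ =>
      (fix tgc (C : list (R * proc)) : Prop :=
         match C with [] => True | (_, Q) :: C' => tguard X Q /\ tgc C' end) C
  | PSig _ => True
  | PVar Y => Y <> X
  | PFix Y Q => if Nat.eq_dec Y X then True else tguard X Q
  end.

Definition choice_ok (C : choice) : Prop :=
  C <> [] /\ Forall (fun pq => 0 < fst pq <= 1) C /\ sum_list fst C = 1.

Fixpoint wf_proc (xs Xs : list nat) (P : proc) : Prop :=
  match P with
  | PNil => True
  | PSnd u C =>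
      (match u with TVal _ => True | TVar x => In x xs end) /\ choice_ok C /\
      (fix wc (C : list (R * proc)) : Prop :=
         match C with [] => True | (_, Q) :: C' => wf_proc xs Xs Q /\ wc C' end) C
  | PRcv x C D =>
      choice_ok C /\ choice_ok D /\
      (fix wc (C : list (R * proc)) : Prop :=
         match C with [] => True | (_, Q) :: C' => wf_proc (x :: xs) Xs Q /\ wc C' end) C /\
      (fix wc (C : list (R * proc)) : Prop :=
         match C with [] => True | (_, Q) :: C' => wf_proc xs Xs Q /\ wc C' end) D
  | PTau C | PSig C =>
      choice_ok C /\
      (fix wc (C : list (R * proc)) : Prop :=
         match C with [] => True | (_, Q) :: C' => wf_proc xs Xs Q /\ wc C' end) C
  | PVar X => In X Xs
  | PFix X Q => tguard X Q /\ wf_proc xs (X :: Xs) Q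
  end.

Definition closed_proc (P : proc) : Prop := wf_proc [] [] P.

Fixpoint procs_ok (M : net) : Prop :=
  match M with
  | NZero | NBot => True
  | NPar M1 M2 => procs_ok M1 /\ procs_ok M2
  | NNode _ P _ => closed_proc P
  end.

Definition nbr_edge (M : net) (a b : nat) : Prop :=
  exists nua, In (a, nua) (nodes M) /\ In b nua /\ In b (nds M).

Definition wf_net (M : net) : Prop :=
  procs_ok M /\
  NoDup (nds M) /\
  (forall n nu, In (n, nu) (nodes M) -> ~ In n nu) /\
  (forall n nun m num, In (n, nun) (nodes M) -> In (m, num) (nodes M) ->
     In m nun -> In n num) /\
  (forall n m, In n (nds M) -> In m (nds M) -> clos_refl_trans nat (nbr_edge M) n m).

Inductive cong : net -> net -> Prop :=
| cong_refl M : cong M M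
| cong_sym M N : cong M N -> cong N M
| cong_trans M N O : cong M N -> cong N O -> cong M O
| cong_par M M' N N' : cong M M' -> cong N N' -> cong (NPar M N) (NPar M' N')
| cong_comm M N : cong (NPar M N) (NPar N M)
| cong_assoc M N O : cong (NPar (NPar M N) O) (NPar M (NPar N O))
| cong_unit M : cong (NPar M NZero) M
| cong_fix n X P nu : cong (NNode n (PFix X P) nu) (NNode n (subst_p X (PFix X P) P) nu).

Definition rcv (n : nat) (nu : list nat) (P : proc) : Prop :=
  exists x C D, cong (NNode n P nu) (NNode n (PRcv x C D) nu).

Definition dist := net -> R.

Definition dirac (M : net) : dist :=
  fun N => if excluded_middle_informative (N = M) then 1 else 0.

Definition sem_node (n : nat) (C : choice) (nu : list nat) : dist :=
  fun N => sum_list (fun pq => fst pq * dirac (NNode n (snd pq) nu) N) C.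

Definition dpar (D T : dist) : dist :=
  fun M => match M with NPar M1 M2 => D M1 * T M2 | _ => 0 end.

Definition is_dist {T : Type} (D : T -> R) : Prop :=
  (forall x, 0 <= D x) /\ has_sum D 1.

(* Neighbour sets in labels are sets of names, represented as predicates. *)
Inductive label : Type :=
| LSnd (m : nat) (v : V) (nu : nat -> Prop)
| LRcv (m : nat) (v : V)
| LTau
| LSig
| LObs (v : V) (nu : nat -> Prop).

Inductive act : Type :=
| AObs (v : V) (nu : nat -> Prop)
| ARcv (m : nat) (v : V)
| ASig
| ATau.

Definition act_label (a : act) : label :=
  match a with
  | AObs v nu => LObs v nu
  | ARcv m v => LRcv m v
  | ASig => LSig
  | ATau => LTau
  end.

Definition setminus_nds (nu : nat -> Prop) (N : net) : nat -> Prop :=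
  fun k => nu k /\ ~ In k (nds N).

Definition bot_par_form (N : net) : Prop := exists N', cong N (NPar NBot N').

Inductive step : net -> label -> dist -> Prop :=
| st_snd m v C nu :
    step (NNode m (PSnd (TVal v) C) nu) (LSnd m v (fun k => In k nu)) (sem_node m C nu)
| st_rcv n m v x C D nu :
    In m nu ->
    step (NNode n (PRcv x C D) nu) (LRcv m v) (sem_node n (subst_vc x v C) nu)
| st_rcv_zero m v : step NZero (LRcv m v) (dirac NZero)
| st_rcv_enb n m v P nu :
    ~ (In m nu /\ rcv n nu P) -> m <> n ->
    step (NNode n P nu) (LRcv m v) (dirac (NNode n P nu))
| st_rcv_par M N m v D T :
    step M (LRcv m v) D -> step N (LRcv m v) T -> step (NPar M N) (LRcv m v) (dpar D T)
| st_bcast_l M N m v nu D T :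
    step M (LSnd m v nu) D -> step N (LRcv m v) T ->
    step (NPar M N) (LSnd m v (setminus_nds nu N)) (dpar D T)
| st_bcast_r M N m v nu D T :
    step M (LSnd m v nu) D -> step N (LRcv m v) T ->
    step (NPar N M) (LSnd m v (setminus_nds nu N)) (dpar T D)
| st_tau m C nu : step (NNode m (PTau C) nu) LTau (sem_node m C nu)
| st_tau_par_l M N D :
    step M LTau D -> ~ bot_par_form N -> step (NPar M N) LTau (dpar D (dirac N))
| st_tau_par_r M N D :
    step M LTau D -> ~ bot_par_form N -> step (NPar N M) LTau (dpar (dirac N) D)
| st_sig_zero : step NZero LSig (dirac NZero)
| st_sig_nil n nu : step (NNode n PNil nu) LSig (dirac (NNode n PNil nu))
| st_timeout n x C D nu : step (NNode n (PRcv x C D) nu) LSig (sem_node n D nu)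
| st_sleep n C nu : step (NNode n (PSig C) nu) LSig (sem_node n C nu)
| st_sig_par M N D T :
    step M LSig D -> step N LSig T -> step (NPar M N) LSig (dpar D T)
| st_rec n X P nu l D :
    step (NNode n (subst_p X (PFix X P) P) nu) l D -> step (NNode n (PFix X P) nu) l D
| st_shh M m v nu D :
    step M (LSnd m v nu) D -> (forall k, ~ nu k) -> step M LTau D
| st_obs M m v nu D :
    step M (LSnd m v nu) D -> (exists k, nu k) -> step M (LObs v nu) D.

Definition hat_step (M : net) (a : act) (T : dist) : Prop :=
  match a with
  | ATau => step M LTau T \/ T = dirac M
  | _ => step M (act_label a) T
  end.

(* Lifting to (sub-)distributions: Delta = sum_i p_i M_i (a finite
   decomposition with p_i > 0); entries (p_i, M_i, Some Theta_i) are the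
   indices in J, with M_i --hat(alpha)--> Theta_i; entries (p_i, M_i, None)
   are indices outside J, M_i having no hat(alpha)-transition; J non-empty;
   Theta = sum_{j in J} p_j Theta_j. *)
Definition lift_step (D : dist) (a : act) (T : dist) : Prop :=
  exists s : list (R * net * option dist),
    (forall p M o, In (p, M, o) s -> 0 < p) /\
    (D = fun N => sum_list (fun e => match e with (p, M, _) => p * dirac M N end) s) /\
    (forall p M T', In (p, M, Some T') s -> hat_step M a T') /\
    (forall p M, In (p, M, None) s -> forall T', ~ hat_step M a T') /\
    (exists p M T', In (p, M, Some T') s) /\
    (T = fun N => sum_list (fun e => match e with
                                     | (p, _, Some T') => p * T' N
                                     | (_, _, None) => 0 end) s).

Definition weak_tau (D T : dist) : Prop :=
  clos_refl_trans dist (fun D1 D2 => lift_step D1 ATau D2) D T.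

Definition weak_step (N : net) (a : act) (T : dist) : Prop :=
  match a with
  | ATau => weak_tau (dirac N) T
  | _ => exists T1 T2, weak_tau (dirac N) T1 /\ lift_step T1 a T2 /\ weak_tau T2 T
  end.

Definition matching (w : net * net -> R) (D T : dist) : Prop :=
  is_dist w /\
  (forall M, has_sum (fun N => w (M, N)) (D M)) /\
  (forall N, has_sum (fun M => w (M, N)) (T N)).

Definition match_cost (d : net -> net -> R) (w : net * net -> R) (c : R) : Prop :=
  has_sum (fun p => w p * d (fst p) (snd p)) c.

Definition Kantorovich (d : net -> net -> R) (D T : dist) (k : R) : Prop :=
  (exists w, matching w D T /\ match_cost d w k) /\
  (forall w c, matching w D T -> match_cost d w c -> k <= c).

Definition pseudoquasimetric (d : net -> net -> R) : Prop :=
  (forall M N, wf_net M -> wf_net N -> 0 <= d M N <= 1) /\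
  (forall M, wf_net M -> d M M = 0) /\
  (forall M N O, wf_net M -> wf_net N -> wf_net O -> d M N <= d M O + d O N).

Definition weak_sim_quasimetric (d : net -> net -> R) : Prop :=
  pseudoquasimetric d /\
  forall M N, wf_net M -> wf_net N -> d M N < 1 ->
    forall a D, step M (act_label a) D ->
      exists T, weak_step N a T /\
        exists r k, has_sum T r /\
          Kantorovich d D (fun X => T X + (1 - r) * dirac NBot X) k /\ k <= d M N.

Definition weak_prob_simulation (Rel : net -> net -> Prop) : Prop :=
  forall M N, Rel M N ->
    forall a D, step M (act_label a) D ->
      exists T, weak_step N a T /\
        exists w, matching w D T /\ (forall M' N', w (M', N') > 0 -> Rel M' N').

End PTCWS.

Arguments net : clear implicits.
Arguments proc : clear implicits.

(* The simulation clause gives N ==alpha==> Theta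
   and a matching of Delta with Theta + (1 - |Theta|) bot of cost 0.  By subject reduction
   all networks in the supports are well formed, where d is nonnegative, so the matching
   only couples networks at distance 0.  It remains to see that |Theta| = 1.

   A network containing bot has no transition at all, so either N is such a network and
   Theta is its Dirac distribution, or Theta lives on bot-free networks; in the latter case
   weight 1 - |Theta| > 0 on bot would couple some bot-free M' in the support of Delta with
   bot at distance 0.  That is impossible, because the only weak transition of bot is to
   stay idle: if there are values, M' can receive on a fresh channel; if there are none,
   M' can let time pass or do a tau that decreases its tau depth, and the tau is matched
   by bot only by coupling a derivative of M' with bot at distance 0 again. *)

From Pilot Require Import Defs.
From Stdlib Require Import Reals Lra Lia List Wf_nat.
From Stdlib Require Import Classical ClassicalEpsilon FunctionalExtensionality.
Import ListNotations.
Open Scope R_scope.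

Section FiniteSums.
Context {T : Type}.
Implicit Types (f : T -> R) (s : list T).

Lemma sum_list_cons f x s : sum_list f (x :: s) = f x + sum_list f s.
Proof. reflexivity. Qed.

Lemma sum_list_nonneg f s : (forall x, In x s -> 0 <= f x) -> 0 <= sum_list f s.
Proof.
  induction s as [|y s IH]; intros Hf; rewrite ?sum_list_cons; cbn; [lra|].
  pose proof (Hf y (or_introl eq_refl)). pose proof (IH (fun x Hx => Hf x (or_intror Hx))). lra.
Qed.

Lemma sum_list_elem_le f s x : (forall y, In y s -> 0 <= f y) -> In x s -> f x <= sum_list f s.
Proof.
  induction s as [|y s IH]; intros Hf Hx; [contradiction|]. rewrite sum_list_cons.
  pose proof (Hf y (or_introl eq_refl)).
  pose proof (sum_list_nonneg f s (fun z Hz => Hf z (or_intror Hz))).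
  destruct Hx as [<-|Hx]; [lra|]. pose proof (IH (fun z Hz => Hf z (or_intror Hz)) Hx). lra.
Qed.

Lemma sum_list_ext f g s : (forall x, In x s -> f x = g x) -> sum_list f s = sum_list g s.
Proof.
  induction s as [|y s IH]; intros Hfg; [reflexivity|].
  rewrite !sum_list_cons, (Hfg y (or_introl eq_refl)), IH by (intros; apply Hfg; now right).
  reflexivity.
Qed.

Lemma sum_list_zero f s : (forall x, In x s -> f x = 0) -> sum_list f s = 0.
Proof.
  induction s as [|y s IH]; intros Hf; [reflexivity|].
  rewrite sum_list_cons, (Hf y (or_introl eq_refl)), IH by (intros; apply Hf; now right).
  ring.
Qed.

Lemma sum_list_neq0 f s : sum_list f s <> 0 -> exists x, In x s /\ f x <> 0.
Proof.
  intros Hs. apply NNPP. intros Hn. apply Hs, sum_list_zero.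
  intros x Hx. apply NNPP. eauto.
Qed.

Lemma has_sum_nonneg_le f a x : (forall y, 0 <= f y) -> has_sum f a -> f x <= a.
Proof.
  intros Hf (s & _ & Hsupp & <-). destruct (classic (f x = 0)) as [->|Hx].
  - now apply sum_list_nonneg.
  - apply sum_list_elem_le; auto.
Qed.

Lemma has_sum_neq0 f a : has_sum f a -> a <> 0 -> exists x, f x <> 0.
Proof.
  intros (s & _ & _ & <-) Ha. destruct (sum_list_neq0 f s Ha) as (x & _ & Hx). eauto.
Qed.

End FiniteSums.

Section Syntax.
Context {V : Type}.
Notation proc := (proc V).
Implicit Types (C D : list (R * proc)) (P Q : proc).

(* [allc f C] is, up to conversion, the recursion over the branches of a choice that
   [wf_proc] and [tguard] inline. *)
Definition allc (f : proc -> Prop) : list (R * proc) -> Prop :=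
  fix go C := match C with [] => True | (_, Q) :: C' => f Q /\ go C' end.

Definition map_choice (h : proc -> proc) C : list (R * proc) :=
  map (fun pq => match pq with (p, Q) => (p, h Q) end) C.

Lemma allc_In f C p Q : allc f C -> In (p, Q) C -> f Q.
Proof.
  induction C as [|[p' Q'] C IH]; cbn; [tauto|].
  intros [HQ HC] [E|HI]; [injection E as -> ->|]; auto.
Qed.

Lemma allc_map_impl f g h C :
  Forall (fun pq => f (snd pq) -> g (h (snd pq))) C -> allc f C -> allc g (map_choice h C).
Proof. induction 1 as [|[p Q] C]; cbn; tauto. Qed.

Lemma allc_impl f g C :
  Forall (fun pq => f (snd pq) -> g (snd pq)) C -> allc f C -> allc g C.
Proof. induction 1 as [|[p Q] C]; cbn; tauto. Qed.

Lemma choice_ok_map h C : choice_ok C -> choice_ok (map_choice h C).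
Proof.
  intros (Hne & Hw & Hs); split; [|split].
  - destruct C; cbn; congruence.
  - unfold map_choice; rewrite Forall_map. eapply Forall_impl; [|exact Hw]. intros []; auto.
  - rewrite <- Hs. clear. induction C as [|[p Q] C IH]; [reflexivity|].
    exact (f_equal (Rplus p) IH).
Qed.

Fixpoint proc_nested_ind (Pr : proc -> Prop) (hnil : Pr PNil)
  (hsnd : forall u C, Forall (fun pq => Pr (snd pq)) C -> Pr (PSnd u C))
  (hrcv : forall x C D, Forall (fun pq => Pr (snd pq)) C -> Forall (fun pq => Pr (snd pq)) D ->
          Pr (PRcv x C D))
  (htau : forall C, Forall (fun pq => Pr (snd pq)) C -> Pr (PTau C))
  (hsig : forall C, Forall (fun pq => Pr (snd pq)) C -> Pr (PSig C))
  (hvar : forall X, Pr (PVar X))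
  (hfix : forall X Q, Pr Q -> Pr (PFix X Q)) (P : proc) {struct P} : Pr P :=
  let IH := proc_nested_ind Pr hnil hsnd hrcv htau hsig hvar hfix in
  let fix go C : Forall (fun pq => Pr (snd pq)) C :=
    match C with
    | [] => Forall_nil _
    | (p, Q) :: C' => @Forall_cons _ (fun pq => Pr (snd pq)) (p, Q) C' (IH Q) (go C')
    end in
  match P with
  | PNil => hnil
  | PSnd u C => hsnd u C (go C)
  | PRcv x C D => hrcv x C D (go C) (go D)
  | PTau C => htau C (go C)
  | PSig C => hsig C (go C)
  | PVar X => hvar X
  | PFix X Q => hfix X Q (IH Q)
  end.

Ltac branchwise IH :=
  first [ eapply allc_map_impl | eapply allc_impl ]; [ | eassumption ];
  eapply Forall_impl; [ | exact IH ]; intros [? ?] IHbranch Hbranch; cbn in *; eauto.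

Lemma wf_proc_mono P xs Xs xs' Xs' :
  incl xs xs' -> incl Xs Xs' -> wf_proc xs Xs P -> wf_proc xs' Xs' P.
Proof.
  revert xs Xs xs' Xs'.
  induction P as [|u C IHC|x C D IHC IHD|C IHC|C IHC|Y|Y Q IHQ] using proc_nested_ind;
    intros xs Xs xs' Xs' Hxs HXs; cbn.
  - tauto.
  - intros (Hu & Hc & HC); split; [destruct u; auto|split; [exact Hc|]].
    branchwise IHC.
  - intros (Hc & Hd & HC & HD); split; [exact Hc|split; [exact Hd|split]].
    + branchwise IHC. eapply IHbranch; [|exact HXs|exact Hbranch].
      apply incl_cons; [now left|now apply incl_tl].
    + branchwise IHD.
  - intros (Hc & HC); split; [exact Hc|]. branchwise IHC.
  - intros (Hc & HC); split; [exact Hc|]. branchwise IHC.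
  - auto.
  - intros (Hg & HQ); split; [exact Hg|]. eapply IHQ; [exact Hxs| |exact HQ].
    apply incl_cons; [now left|]. now apply incl_tl.
Qed.

Lemma wf_proc_tguard P xs Xs Y : wf_proc xs Xs P -> ~ In Y Xs -> tguard Y P.
Proof.
  revert xs Xs.
  induction P as [|u C IHC|x C D IHC IHD|C IHC|C IHC|Z|Z Q IHQ] using proc_nested_ind;
    intros xs Xs; cbn.
  - tauto.
  - intros (_ & _ & HC) HY. branchwise IHC.
  - intros (_ & _ & HC & _) HY. branchwise IHC.
  - intros (_ & HC) HY. branchwise IHC.
  - tauto.
  - intros HZ HY ->. contradiction.
  - intros (_ & HQ) HY. destruct Nat.eq_dec as [|HZY]; [exact I|].
    eapply IHQ; [exact HQ|]. intros [->|]; auto.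
Qed.

Lemma closed_tguard P Y : closed_proc P -> tguard Y P.
Proof. intros HP. eapply wf_proc_tguard; [exact HP|auto]. Qed.

Lemma tguard_subst_p P X Y Q : closed_proc Q -> tguard Y P -> tguard Y (subst_p X Q P).
Proof.
  intros HQ.
  induction P as [|u C IHC|x C D IHC IHD|C IHC|C IHC|Z|Z P IHP] using proc_nested_ind; cbn.
  - tauto.
  - intros HC. branchwise IHC.
  - intros HC. branchwise IHC.
  - intros HC. branchwise IHC.
  - tauto.
  - destruct Nat.eq_dec; [intros; now apply closed_tguard|tauto].
  - destruct (Nat.eq_dec Z X); cbn; destruct Nat.eq_dec; tauto.
Qed.

Lemma wf_subst_p P xs Xs Xs' X Q :
  closed_proc Q -> (forall Z, In Z Xs -> Z = X \/ In Z Xs') ->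
  wf_proc xs Xs P -> wf_proc xs Xs' (subst_p X Q P).
Proof.
  intros HQ. revert xs Xs Xs'.
  induction P as [|u C IHC|x C D IHC IHD|C IHC|C IHC|Z|Z P IHP] using proc_nested_ind;
    intros xs Xs Xs' HXs; cbn.
  - tauto.
  - intros (Hu & Hc & HC). split; [exact Hu|split; [now apply choice_ok_map|]].
    branchwise IHC.
  - intros (Hc & Hd & HC & HD). do 2 (split; [now apply choice_ok_map|]).
    split; [branchwise IHC|branchwise IHD].
  - intros (Hc & HC). split; [now apply choice_ok_map|]. branchwise IHC.
  - intros (Hc & HC). split; [now apply choice_ok_map|]. branchwise IHC.
  - intros HZ. destruct Nat.eq_dec as [->|HZX].
    + eapply wf_proc_mono; [| |exact HQ]; intros ? [].
    + cbn. destruct (HXs Z HZ); [congruence|assumption].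
  - intros (Hg & HP). destruct Nat.eq_dec as [->|HZX]; cbn; split.
    + exact Hg.
    + eapply wf_proc_mono; [apply incl_refl| |exact HP].
      intros Z [<-|HZ]; [now left|]. destruct (HXs Z HZ) as [<-|]; [now left|now right].
    + now apply tguard_subst_p.
    + eapply IHP; [|exact HP].
      intros Y [<-|HY]; [now right; left|]. destruct (HXs Y HY); [now left|now right; right].
Qed.

Lemma closed_unfold X P : closed_proc (PFix X P) -> closed_proc (subst_p X (PFix X P) P).
Proof.
  intros HP. eapply wf_subst_p; [exact HP| |exact (proj2 HP)].
  intros Z [<-|[]]. now left.
Qed.

Lemma tguard_subst_v P X x v : tguard X P -> tguard X (subst_v x v P).
Proof.
  induction P as [|u C IHC|y C D IHC IHD|C IHC|C IHC|Z|Z P IHP] using proc_nested_ind; cbn.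
  - tauto.
  - intros HC. branchwise IHC.
  - destruct Nat.eq_dec; [tauto|]. intros HC. branchwise IHC.
  - intros HC. branchwise IHC.
  - tauto.
  - tauto.
  - destruct Nat.eq_dec; auto.
Qed.

Lemma wf_subst_v P xs xs' Xs x v :
  (forall z, In z xs -> z = x \/ In z xs') ->
  wf_proc xs Xs P -> wf_proc xs' Xs (subst_v x v P).
Proof.
  revert xs xs' Xs.
  induction P as [|u C IHC|y C D IHC IHD|C IHC|C IHC|Z|Z P IHP] using proc_nested_ind;
    intros xs xs' Xs Hxs; cbn.
  - tauto.
  - intros (Hu & Hc & HC). split; [|split; [now apply choice_ok_map|branchwise IHC]].
    destruct u as [|z]; cbn; [exact I|]. destruct Nat.eq_dec; [exact I|].
    destruct (Hxs z Hu); [congruence|assumption].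
  - intros (Hc & Hd & HC & HD). destruct Nat.eq_dec as [<-|Hyx].
    + split; [exact Hc|split; [now apply choice_ok_map|split; [|branchwise IHD]]].
      eapply allc_impl; [|exact HC]. apply Forall_forall. intros pq _.
      apply wf_proc_mono; [|apply incl_refl].
      intros z [<-|Hz]; [now left|]. destruct (Hxs z Hz) as [<-|]; [now left|now right].
    + do 2 (split; [now apply choice_ok_map|]). split; [branchwise IHC|branchwise IHD].
      eapply IHbranch; [|exact Hbranch].
      intros z [<-|Hz]; [now right; left|]. destruct (Hxs z Hz); [now left|now right; right].
  - intros (Hc & HC). split; [now apply choice_ok_map|]. branchwise IHC.
  - intros (Hc & HC). split; [now apply choice_ok_map|]. branchwise IHC.
  - tauto.
  - intros (Hg & HP). split; [now apply tguard_subst_v|]. eapply IHP; eauto.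
Qed.

Lemma closed_subst_v x v P : wf_proc [x] [] P -> closed_proc (subst_v x v P).
Proof. apply wf_subst_v. intros z [<-|[]]. now left. Qed.

End Syntax.

Section Networks.
Context {V : Type}.
Notation net := (net V).
Notation proc := (proc V).
Implicit Types (M N X Y : net) (D T : net -> R).

Lemma dirac_eq M : dirac M M = 1.
Proof. unfold dirac. destruct excluded_middle_informative; congruence. Qed.

Lemma dirac_neq0 M N : dirac M N <> 0 -> N = M.
Proof. unfold dirac. destruct excluded_middle_informative; congruence. Qed.

Lemma dirac_nonneg M N : 0 <= dirac M N.
Proof. unfold dirac. destruct excluded_middle_informative; lra. Qed.

Lemma sum_list_dirac M s : NoDup s -> In M s -> sum_list (dirac M) s = 1.
Proof.
  induction 1 as [|N s HN Hs IH]; [intros []|]. rewrite sum_list_cons. intros [<-|HM].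
  - rewrite dirac_eq, sum_list_zero; [lra|].
    intros X HX. unfold dirac. destruct excluded_middle_informative; congruence.
  - rewrite IH by exact HM. unfold dirac. destruct excluded_middle_informative; [congruence|lra].
Qed.

Lemma has_sum_dirac_inv M r : has_sum (dirac M) r -> r = 1.
Proof.
  intros (s & Hs & Hsupp & <-). apply sum_list_dirac; [exact Hs|].
  apply Hsupp. rewrite dirac_eq. lra.
Qed.

Definition supp_in (P : net -> Prop) D : Prop := forall X, D X <> 0 -> P X.

Lemma supp_in_dirac (P : net -> Prop) M : P M -> supp_in P (dirac M).
Proof. intros HM X HX. now rewrite (dirac_neq0 _ _ HX). Qed.

Lemma dpar_neq0 D T X :
  dpar D T X <> 0 -> exists X1 X2, X = NPar X1 X2 /\ D X1 <> 0 /\ T X2 <> 0.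
Proof.
  destruct X as [|X1 X2| |]; cbn; try congruence. intros H.
  exists X1, X2. split; [reflexivity|split]; intros E; apply H; rewrite E; ring.
Qed.

Lemma sem_node_neq0 n C nu X :
  sem_node n C nu X <> 0 -> exists p Q, In (p, Q) C /\ X = NNode n Q nu.
Proof.
  intros H. destruct (sum_list_neq0 _ _ H) as ([p Q] & HQ & HX). exists p, Q.
  split; [exact HQ|]. apply dirac_neq0. intros E. apply HX. cbn. rewrite E. ring.
Qed.

Lemma matching_support w D T X Y : matching w D T -> w (X, Y) <> 0 -> D X <> 0 /\ T Y <> 0.
Proof.
  intros ((Hw & _) & HD & HT) HXY. pose proof (Hw (X, Y)).
  split; intros E.
  - pose proof (has_sum_nonneg_le _ _ Y (fun N => Hw (X, N)) (HD X)). cbn in *. lra.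
  - pose proof (has_sum_nonneg_le _ _ X (fun N => Hw (N, Y)) (HT Y)). cbn in *. lra.
Qed.

Lemma matching_cost0 d w D T k :
  pseudoquasimetric d -> matching w D T -> match_cost d w k -> k <= 0 ->
  supp_in wf_net D -> supp_in wf_net T ->
  forall X Y, w (X, Y) > 0 -> wf_net X /\ wf_net Y /\ d X Y = 0.
Proof.
  intros (Hd & _ & _) Hm Hc Hk HD HT X Y HXY.
  assert (Hwf : forall X Y, w (X, Y) <> 0 -> wf_net X /\ wf_net Y).
  { intros X' Y' H. destruct (matching_support _ _ _ _ _ Hm H). auto. }
  assert (Hterm : forall p, 0 <= w p * d (fst p) (snd p)).
  { intros [X' Y']. cbn. destruct (classic (w (X', Y') = 0)) as [->|H]; [lra|].
    destruct (Hwf X' Y' H). apply Rmult_le_pos; [apply Hm|apply Hd; auto]. }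
  destruct (Hwf X Y) as [HX HY]; [lra|]. split; [exact HX|split; [exact HY|]].
  pose proof (has_sum_nonneg_le _ _ (X, Y) Hterm Hc). pose proof (Hterm (X, Y)). cbn in *.
  assert (w (X, Y) * d X Y = 0) as E by lra.
  destruct (Rmult_integral _ _ E); [lra|assumption].
Qed.

(** * Subject reduction *)

Fixpoint nobot M : Prop :=
  match M with NBot => False | NPar M1 M2 => nobot M1 /\ nobot M2 | _ => True end.

Lemma cong_nobot M N : cong M N -> nobot M <-> nobot N.
Proof. induction 1; cbn; tauto. Qed.

Lemma nobot_iff M : nobot M <-> ~ bot_par_form M.
Proof.
  split.
  - intros HM (N & HN). apply cong_nobot in HN. cbn in HN. tauto.
  - intros HM. apply NNPP. intros Hn. apply HM. clear HM.
    induction M as [|M1 IH1 M2 IH2| |]; cbn in Hn.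
    + tauto.
    + apply not_and_or in Hn as [Hn|Hn];
        [destruct (IH1 Hn) as (N & HN)|destruct (IH2 Hn) as (N & HN)].
      * exists (NPar N M2). eapply cong_trans; [|apply cong_assoc].
        apply cong_par; [exact HN|apply cong_refl].
      * exists (NPar N M1). eapply cong_trans; [apply cong_comm|].
        eapply cong_trans; [|apply cong_assoc].
        apply cong_par; [exact HN|apply cong_refl].
    + tauto.
    + exists NZero. apply cong_sym, cong_unit.
Qed.

Lemma step_nobot M l D : step M l D -> nobot M.
Proof. induction 1; cbn; rewrite ?nobot_iff in *; tauto. Qed.

Definition conforms M X : Prop := procs_ok X /\ nodes X = nodes M /\ nobot X.

Lemma supp_in_sem_node n P nu C :
  allc closed_proc C -> supp_in (conforms (NNode n P nu)) (sem_node n C nu).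
Proof.
  intros HC X HX. destruct (sem_node_neq0 _ _ _ _ HX) as (p & Q & HQ & ->).
  repeat split. exact (allc_In _ _ _ _ HC HQ).
Qed.

Lemma supp_in_dpar M N D T :
  supp_in (conforms M) D -> supp_in (conforms N) T -> supp_in (conforms (NPar M N)) (dpar D T).
Proof.
  intros HD HT X HX. destruct (dpar_neq0 _ _ _ HX) as (X1 & X2 & -> & H1 & H2).
  destruct (HD _ H1) as (P1 & E1 & B1), (HT _ H2) as (P2 & E2 & B2).
  split; [|split]; cbn; [tauto|congruence|tauto].
Qed.

Lemma step_conforms M l D : step M l D -> procs_ok M -> supp_in (conforms M) D.
Proof.
  induction 1 as [m v C nu|n m v x C D nu|m v|n m v P nu|M N m v D T _ IHM _ IHN
    |M N m v nu D T _ IHM _ IHN|M N m v nu D T _ IHM _ IHN|m C nu|M N D _ IHM HN|M N D _ IHM HN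
    | |n nu|n x C D nu|n C nu|M N D T _ IHM _ IHN|n X P nu l D _ IH|M m v nu D _ IH _
    |M m v nu D _ IH _]; cbn; intros Hp.
  all: try (apply supp_in_dirac; repeat split; cbn in *; tauto).
  all: try (apply supp_in_sem_node; tauto).
  all: try (apply supp_in_dpar; tauto).
  all: try exact (IH Hp).
  - apply supp_in_sem_node. eapply allc_map_impl; [|apply Hp].
    apply Forall_forall. intros pq _. apply closed_subst_v.
  - apply supp_in_dpar; [tauto|]. apply supp_in_dirac.
    unfold conforms. rewrite nobot_iff. repeat split; tauto.
  - apply supp_in_dpar; [|tauto]. apply supp_in_dirac.
    unfold conforms. rewrite nobot_iff. repeat split; tauto.
  - exact (IH (closed_unfold _ _ Hp)).
Qed.

Definition proper_net X : Prop := wf_net X /\ nobot X.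

Lemma nds_nodes M : nds M = map fst (nodes M).
Proof. induction M; cbn; rewrite ?map_app; congruence. Qed.

(* Every clause of [wf_net] other than [procs_ok] only depends on [nodes]. *)
Lemma wf_net_conforms M X : wf_net M -> conforms M X -> proper_net X.
Proof.
  intros (_ & H2 & H3 & H4 & H5) (Hp & Hn & Hb). split; [|exact Hb].
  assert (Hd : nds X = nds M) by (rewrite !nds_nodes; congruence).
  assert (He : nbr_edge X = nbr_edge M) by (unfold nbr_edge; now rewrite Hd, Hn).
  unfold wf_net. rewrite Hd, Hn, He. tauto.
Qed.

Lemma step_support M l D : wf_net M -> step M l D -> supp_in proper_net D.
Proof.
  intros HM HD X HX. eapply wf_net_conforms; [exact HM|].
  exact (step_conforms _ _ _ HD (proj1 HM) X HX).
Qed.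

(** * Weak transitions *)

Lemma lift_entry_le (s : list (R * net * option (@Defs.dist V))) p M o :
  (forall p M o, In (p, M, o) s -> 0 < p) -> In (p, M, o) s ->
  p <= sum_list (fun e => match e with (q, M', _) => q * dirac M' M end) s.
Proof.
  intros Hpos Hin. replace p with (p * dirac M M) at 1 by (rewrite dirac_eq; ring).
  apply (sum_list_elem_le (fun e => match e with (q, M', _) => q * dirac M' M end) s (p, M, o));
    [|exact Hin].
  intros [[q M'] o'] Hq. apply Rmult_le_pos; [apply Rlt_le; eapply Hpos; eauto|apply dirac_nonneg].
Qed.

Section WeakInvariant.
Variable P : net -> Prop.
Hypothesis hat_step_invariant : forall M a T, P M -> hat_step M a T -> supp_in P T.

Lemma lift_step_invariant D a T : supp_in P D -> lift_step D a T -> supp_in P T.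
Proof.
  intros HD (s & Hpos & ED & Hsome & _ & _ & ET) X HX. rewrite ET in HX.
  destruct (sum_list_neq0 _ _ HX) as ([[p M] [T'|]] & Hin & HpT); [|congruence].
  apply (hat_step_invariant M a T'); [|exact (Hsome _ _ _ Hin)|].
  - apply HD. rewrite ED. cbv beta. pose proof (lift_entry_le _ _ _ _ Hpos Hin).
    pose proof (Hpos _ _ _ Hin). lra.
  - intros E. apply HpT. rewrite E. ring.
Qed.

Lemma weak_tau_invariant D T : supp_in P D -> weak_tau D T -> supp_in P T.
Proof. intros HD H. induction H; eauto using lift_step_invariant. Qed.

Lemma weak_step_invariant N a T : P N -> weak_step N a T -> supp_in P T.
Proof.
  intros HN. pose proof (supp_in_dirac P N HN) as HD.
  destruct a; cbn; [intros (T1 & T2 & H1 & H2 & H3)..|intros H].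
  all: eauto using weak_tau_invariant, lift_step_invariant.
Qed.

End WeakInvariant.

Lemma hat_step_support M a T : proper_net M -> hat_step M a T -> supp_in proper_net T.
Proof.
  intros HM. destruct a; cbn; [exact (step_support _ _ _ (proj1 HM))..|].
  intros [H| ->]; [exact (step_support _ _ _ (proj1 HM) H)|exact (supp_in_dirac _ _ HM)].
Qed.

Definition stuck M : Prop := forall l D, ~ step M l D.

Lemma lift_step_stuck M a T : stuck M -> lift_step (dirac M) a T -> a = ATau /\ T = dirac M.
Proof.
  intros HM (s & Hpos & ED & Hsome & Hnone & (p0 & M0 & T0 & Hin0) & ET).
  assert (Hat : forall p M' o, In (p, M', o) s -> M' = M).
  { intros p M' o Hin. apply dirac_neq0. rewrite ED. cbv beta.
    pose proof (lift_entry_le _ _ _ _ Hpos Hin). pose proof (Hpos _ _ _ Hin). lra. }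
  assert (Htau : forall p T', In (p, M, Some T') s -> a = ATau /\ T' = dirac M).
  { intros p T' Hin. specialize (Hsome _ _ _ Hin).
    destruct a; cbn in Hsome; try (destruct (HM _ _ Hsome)).
    destruct Hsome as [H|]; [destruct (HM _ _ H)|auto]. }
  rewrite (Hat _ _ _ Hin0) in Hin0. destruct (Htau _ _ Hin0) as [-> _]. split; [reflexivity|].
  rewrite ET, ED. apply functional_extensionality. intros X. apply sum_list_ext.
  intros [[p M'] [T'|]] Hin; rewrite (Hat _ _ _ Hin) in Hin |- *.
  - now destruct (Htau _ _ Hin) as [_ ->].
  - destruct (Hnone _ _ Hin (dirac M)). now right.
Qed.

Lemma weak_tau_stuck M T : stuck M -> weak_tau (dirac M) T -> T = dirac M.
Proof.
  intros HM H. remember (dirac M) as D eqn:ED.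
  induction H as [D T H|D|D1 D2 D3 _ IH12 _ IH23]; subst.
  - exact (proj2 (lift_step_stuck _ _ _ HM H)).
  - reflexivity.
  - rewrite IH23; auto.
Qed.

Lemma weak_step_stuck M a T : stuck M -> weak_step M a T -> a = ATau /\ T = dirac M.
Proof.
  intros HM. destruct a; cbn; [intros (T1 & T2 & H1 & H2 & _)..|intros H].
  all: try (rewrite (weak_tau_stuck _ _ HM H1) in H2; now destruct (lift_step_stuck _ _ _ HM H2)).
  split; [reflexivity|exact (weak_tau_stuck _ _ HM H)].
Qed.

Lemma weak_step_cases N a T :
  wf_net N -> weak_step N a T -> supp_in proper_net T \/ T = dirac N.
Proof.
  intros HN H. destruct (classic (nobot N)) as [Hb|Hb].
  - left. exact (weak_step_invariant _ hat_step_support _ _ _ (conj HN Hb) H).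
  - right. refine (proj2 (weak_step_stuck _ _ _ _ H)).
    intros l D HD. exact (Hb (step_nobot _ _ _ HD)).
Qed.

Lemma wf_net_bot : wf_net (@NBot V).
Proof. repeat split; cbn; try tauto. constructor. Qed.

Lemma stuck_bot : stuck (@NBot V).
Proof. intros l D H. exact (step_nobot _ _ _ H). Qed.

(** * Progress of bot-free networks *)

Lemma in_le_list_max k l : In k l -> (k <= list_max l)%nat.
Proof.
  intros Hk. pose proof (proj1 (list_max_le l (list_max l)) (le_n _)) as Hall.
  rewrite Forall_forall in Hall. auto.
Qed.

Lemma fresh_name_exists X : exists m, forall n nu, In (n, nu) (nodes X) -> ~ In m nu /\ m <> n.
Proof.
  exists (S (list_max (flat_map (fun e => fst e :: snd e) (nodes X)))).
  intros n nu Hin.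
  assert (Hle : forall k, In k (n :: nu) ->
            (k <= list_max (flat_map (fun e => fst e :: snd e) (nodes X)))%nat).
  { intros k Hk. apply in_le_list_max, in_flat_map. now exists (n, nu). }
  split; [intros Hm; specialize (Hle _ (or_intror Hm))|specialize (Hle n (or_introl eq_refl))]; lia.
Qed.

(* Rule RcvEnb applies at every node, since [m] is nobody's neighbour. *)
Lemma step_rcv_fresh (v : V) m X :
  nobot X -> (forall n nu, In (n, nu) (nodes X) -> ~ In m nu /\ m <> n) ->
  exists D, step X (LRcv m v) D.
Proof.
  induction X as [|X1 IH1 X2 IH2|n P nu|]; cbn; intros Hb Hfresh.
  - eexists. apply st_rcv_zero.
  - destruct IH1 as (D1 & H1); [tauto|intros; apply Hfresh, in_or_app; auto|].
    destruct IH2 as (D2 & H2); [tauto|intros; apply Hfresh, in_or_app; auto|].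
    eexists. apply st_rcv_par; eassumption.
  - destruct (Hfresh n nu (or_introl eq_refl)). eexists. apply st_rcv_enb; tauto.
  - contradiction.
Qed.

Fixpoint tau_depth (P : proc) : nat :=
  match P with
  | PTau C =>
      S ((fix go C := match C with [] => 0 | (_, Q) :: C' => Nat.max (tau_depth Q) (go C') end) C)
  | PFix _ Q => tau_depth Q
  | _ => 0
  end%nat.

Fixpoint fix_depth (P : proc) : nat :=
  match P with PFix _ Q => S (fix_depth Q) | _ => 0 end.

Fixpoint net_tau_depth M : nat :=
  match M with
  | NNode _ P _ => tau_depth P
  | NPar M1 M2 => net_tau_depth M1 + net_tau_depth M2
  | _ => 0
  end%nat.

Lemma tau_depth_branch_lt C p Q : In (p, Q) C -> (tau_depth Q < tau_depth (PTau C))%nat.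
Proof.
  induction C as [|[p' Q'] C IH]; cbn; intros H; [contradiction|].
  destruct H as [E|H]; [injection E as -> ->; lia|]. specialize (IH H). cbn in IH. lia.
Qed.

Lemma tau_depth_subst_p P Z Q : tguard Z P -> tau_depth (subst_p Z Q P) = tau_depth P.
Proof.
  induction P as [|u C IHC|x C D IHC IHD|C IHC|C IHC|W|W P IHP] using proc_nested_ind;
    cbn; intros H; auto.
  - f_equal. induction C as [|[p P] C IH]; [reflexivity|].
    apply Forall_cons_iff in IHC as [IHP IHC]. destruct H as [HP HC]. cbn in IHP |- *.
    rewrite IHP, IH; auto.
  - destruct Nat.eq_dec; [congruence|reflexivity].
  - destruct (Nat.eq_dec W Z); auto.
Qed.

Lemma fix_depth_subst_p P Z Q : tguard Z P -> fix_depth (subst_p Z Q P) = fix_depth P.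
Proof.
  induction P as [| | | | |W|W P IHP] using proc_nested_ind; cbn; intros HZ; auto.
  - destruct Nat.eq_dec; [congruence|reflexivity].
  - destruct (Nat.eq_dec W Z); cbn; auto.
Qed.

Lemma node_progress (Hv : V -> False) P n nu : closed_proc P ->
  (exists D, step (NNode n P nu) LSig D) \/
  (exists D, step (NNode n P nu) LTau D /\ supp_in (fun Y => net_tau_depth Y < tau_depth P)%nat D).
Proof.
  remember (fix_depth P) as k eqn:Hk. revert P Hk.
  induction k as [k IH] using lt_wf_ind. intros P -> HP.
  destruct P as [|[v|x] C|x C D|C|C|Z|Z Q].
  - left. eexists. apply st_sig_nil.
  - destruct (Hv v).
  - destruct HP as [[] _].
  - left. eexists. apply st_timeout.
  - right. eexists. split; [apply st_tau|]. intros Y HY.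
    destruct (sem_node_neq0 _ _ _ _ HY) as (p & Q & HQ & ->). exact (tau_depth_branch_lt _ _ _ HQ).
  - left. eexists. apply st_sleep.
  - destruct HP.
  - assert (Hg : tguard Z Q) by exact (proj1 HP).
    assert (Hlt : (fix_depth (subst_p Z (PFix Z Q) Q) < fix_depth (PFix Z Q))%nat)
      by (rewrite fix_depth_subst_p by exact Hg; cbn; lia).
    destruct (IH _ Hlt _ eq_refl (closed_unfold _ _ HP)) as [(D & HD)|(D & HD & Hdepth)].
    + left. exists D. now apply st_rec.
    + right. exists D. split; [now apply st_rec|]. cbn. now rewrite tau_depth_subst_p in Hdepth.
Qed.

Lemma net_progress (Hv : V -> False) X : nobot X -> procs_ok X ->
  (exists D, step X LSig D) \/
  (exists D, step X LTau D /\ supp_in (fun Y => net_tau_depth Y < net_tau_depth X)%nat D).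
Proof.
  induction X as [|X1 IH1 X2 IH2|n P nu|]; cbn; intros Hb Hp.
  - left. eexists. apply st_sig_zero.
  - assert (N1 : ~ bot_par_form X1) by (apply nobot_iff; tauto).
    assert (N2 : ~ bot_par_form X2) by (apply nobot_iff; tauto).
    destruct IH1 as [(D1 & H1)|(D1 & H1 & K1)]; [tauto..| |].
    + destruct IH2 as [(D2 & H2)|(D2 & H2 & K2)]; [tauto..| |].
      * left. eexists. apply st_sig_par; eassumption.
      * right. eexists. split; [apply st_tau_par_r; eassumption|]. intros Y HY.
        destruct (dpar_neq0 _ _ _ HY) as (Y1 & Y2 & -> & HY1 & HY2).
        rewrite (dirac_neq0 _ _ HY1). specialize (K2 _ HY2). cbn in K2 |- *. lia.
    + right. eexists. split; [apply st_tau_par_l; eassumption|]. intros Y HY.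
      destruct (dpar_neq0 _ _ _ HY) as (Y1 & Y2 & -> & HY1 & HY2).
      rewrite (dirac_neq0 _ _ HY2). specialize (K1 _ HY1). cbn in K1 |- *. lia.
  - now apply node_progress.
  - contradiction.
Qed.

Section ZeroDistance.
Variable d : net -> net -> R.
Hypothesis d_wsq : weak_sim_quasimetric d.

Lemma zero_distance_matching M N a D :
  wf_net M -> wf_net N -> d M N = 0 -> step M (act_label a) D ->
  exists T r w, weak_step N a T /\ has_sum T r /\
    matching w D (fun X => T X + (1 - r) * dirac NBot X) /\
    forall X Y, w (X, Y) > 0 -> wf_net X /\ wf_net Y /\ d X Y = 0.
Proof.
  intros HM HN HMN HD. destruct d_wsq as [Hpq Hsim].
  destruct (Hsim M N HM HN ltac:(lra) a D HD) as (T & HT & r & k & Hr & ((w & Hw & Hc) & _) & Hk).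
  exists T, r, w. split; [exact HT|split; [exact Hr|split; [exact Hw|]]].
  apply (matching_cost0 d w D _ k Hpq Hw Hc ltac:(lra)).
  - intros X HX. exact (proj1 (step_support _ _ _ HM HD X HX)).
  - intros Y HY. destruct (classic (T Y = 0)) as [E|E].
    + replace Y with (@NBot V); [exact wf_net_bot|].
      symmetry. apply dirac_neq0. intros E'. apply HY. rewrite E, E'. ring.
    + destruct (weak_step_cases _ _ _ HN HT) as [Hs| ->]; [exact (proj1 (Hs Y E))|].
      now rewrite (dirac_neq0 _ _ E).
Qed.

Lemma dist_to_bot_neq0 X : proper_net X -> d X NBot <> 0.
Proof.
  destruct (classic (inhabited V)) as [[v]|Hv].
  - intros HX HXd. destruct (fresh_name_exists X) as (m & Hm).
    destruct (step_rcv_fresh v m X (proj2 HX) Hm) as (D & HD).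
    destruct (zero_distance_matching X NBot (ARcv m v) D (proj1 HX) wf_net_bot HXd HD)
      as (T & _ & _ & HT & _).
    now destruct (weak_step_stuck _ _ _ stuck_bot HT).
  - assert (Hv' : V -> False) by (intros v; apply Hv; now constructor).
    remember (net_tau_depth X) as k eqn:Hk. revert X Hk.
    induction k as [k IH] using lt_wf_ind. intros X -> HX HXd.
    destruct (net_progress Hv' X (proj2 HX) (proj1 (proj1 HX))) as [(D & HD)|(D & HD & Hdepth)].
    + destruct (zero_distance_matching X NBot ASig D (proj1 HX) wf_net_bot HXd HD)
        as (T & _ & _ & HT & _).
      now destruct (weak_step_stuck _ _ _ stuck_bot HT).
    + destruct (zero_distance_matching X NBot ATau D (proj1 HX) wf_net_bot HXd HD)
        as (T & r & w & HT & Hr & Hw & Hrel).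
      destruct (weak_step_stuck _ _ _ stuck_bot HT) as [_ ->].
      destruct (has_sum_neq0 _ _ (proj2 (proj1 Hw)) ltac:(lra)) as ([X' Y] & HXY).
      assert (Hpos : w (X', Y) > 0) by (pose proof (proj1 (proj1 Hw) (X', Y)); lra).
      destruct (matching_support _ _ _ _ _ Hw HXY) as [HX' HY].
      rewrite (has_sum_dirac_inv _ _ Hr) in HY.
      assert (Y = NBot) as -> by (apply dirac_neq0; intros E; apply HY; rewrite E; ring).
      apply (IH _ (Hdepth X' HX') X' eq_refl (step_support _ _ _ (proj1 HX) HD X' HX')).
      exact (proj2 (proj2 (Hrel _ _ Hpos))).
Qed.

End ZeroDistance.
End Networks.

Theorem proposition2p7 (V : Type) (d : net V -> net V -> R) :
  weak_sim_quasimetric d ->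
  weak_prob_simulation (fun M N => wf_net M /\ wf_net N /\ d M N = 0).
Proof.
  intros Hd M N (HM & HN & HMN) a D HD.
  destruct (zero_distance_matching d Hd M N a D HM HN HMN HD) as (T & r & w & HT & Hr & Hw & Hrel).
  assert (Hbot : T NBot + (1 - r) * dirac NBot (@NBot V) = 0).
  { apply NNPP. intros Hne.
    destruct (has_sum_neq0 _ _ (proj2 (proj2 Hw) NBot) Hne) as (X & HX).
    assert (Hpos : w (X, NBot) > 0) by (pose proof (proj1 (proj1 Hw) (X, NBot)); lra).
    apply (dist_to_bot_neq0 d Hd X).
    - exact (step_support _ _ _ HM HD X (proj1 (matching_support _ _ _ _ _ Hw HX))).
    - exact (proj2 (proj2 (Hrel _ _ Hpos))). }
  assert (r = 1) as ->.
  { destruct (weak_step_cases _ _ _ HN HT) as [Hs| ->].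
    - assert (T NBot = 0) by (apply NNPP; intros E; exact (proj2 (Hs _ E))).
      rewrite dirac_eq in Hbot. lra.
    - exact (has_sum_dirac_inv _ _ Hr). }
  replace (fun X => T X + (1 - 1) * dirac NBot X) with T in Hw
    by (apply functional_extensionality; intros; ring).
  exists T. split; [exact HT|]. exists w. split; [exact Hw|exact Hrel].
Qed.
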